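(* For every $n\ge 1$ and every $\alpha'\in\dot\Delta'$ we have $r_{\alpha'}(\dot{\mathcal S}_n)\subset \dot{\mathcal S}'_{n+1}$ (and, symmetrically, $r_{\alpha}(\dot{\mathcal S}'_n)\subset \dot{\mathcal S}_{n+1}$ for every $\alpha\in\dot\Delta$).
   Context: Let $\tau=(1+\sqrt5)/2$, $\tau'=(1-\sqrt5)/2$. Identify $\mathbb{R}^4$ (standard dot product) with the quaternions. Let $\Delta\subset\mathbb{R}^4$ be the set of 120 vectors consisting of: the 8 vectors obtained from $(\pm1,0,0,0)$ by permuting coordinates; the 16 vectors $\frac12(\pm1,\pm1,\pm1,\pm1)$; and the 96 vectors obtained from $\frac12(0,\pm1,\pm\tau',\pm\tau)$ (all sign choices) by even permutations of the coordinates. Let $\Delta'$ be the image of $\Delta$ under the Galois conjugation $\tau\leftrightarrow\tau'$ applied to each coordinate. Put $K=\Delta\cap\Delta'$, $\dot\Delta=\Delta\setminus K$, $\dot\Delta'=\Delta'\setminus K$. For a unit vector $a$, $r_a(x)=x-2(x\cdot a)a$. Let $\mathbb F_4=\mathbb{Z}[\tau]/2\mathbb{Z}[\tau]$ (elements $\bar0,\bar1,\bar\tau,\bar{\tau'}$) and for $y\in\mathbb{Z}[\tau]^4$ let $\bar y\in\mathbb F_4^4$ be its coordinatewise reduction. Let $\dot A\subset\mathbb F_4^4$ be the 12 vectors obtained from $(\bar0,\bar1,\bar{\tau'},\bar\tau)$ by even permutations of coordinates, and $\dot A'$ the 12 vectors obtained from it by odd permutations. For $n\ge1$, $\dot{\mathcal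 S}_n=\{x\in 2^{-n}\mathbb{Z}[\tau]^4: x\cdot x=1,\ \overline{2^nx}\in\dot A\}$ and $\dot{\mathcal S}'_n=\{x\in 2^{-n}\mathbb{Z}[\tau]^4: x\cdot x=1,\ \overline{2^nx}\in\dot A'\}$. *)

From Stdlib Require Import Reals ZArith.
From mathcomp Require Import all_boot all_fingroup.

Set Implicit Arguments.
Unset Strict Implicit.
Unset Printing Implicit Defensive.

Local Open Scope R_scope.

Definition vec := 'I_4 -> R.

Definition tau : R := (1 + sqrt 5) / 2.
Definition tau' : R := (1 - sqrt 5) / 2.

Definition dot (x y : vec) : R := \big[Rplus/0]_(i < 4) (x i * y i).

Definition refl (a x : vec) : vec := fun i => x i - 2 * dot x a * a i.

Definition mk4 (c0 c1 c2 c3 : R) : vec :=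
  fun i => match nat_of_ord i with 0 => c0 | 1 => c1 | 2 => c2 | _ => c3 end.

Definition is_sign (e : R) : Prop := e = 1 \/ e = -1.

(* Delta = DeltaP tau tau'; its Galois conjugate (tau <-> tau', rationals
   fixed) is DeltaP tau' tau. *)
Definition DeltaP (t t' : R) (v : vec) : Prop :=
  (exists (s : 'S_4) (e : R), is_sign e /\
      forall i, v i = mk4 e 0 0 0 (s i))
  \/ (exists e0 e1 e2 e3 : R,
        [/\ is_sign e0, is_sign e1, is_sign e2 & is_sign e3] /\
        forall i, v i = mk4 (e0 / 2) (e1 / 2) (e2 / 2) (e3 / 2) i)
  \/ (exists (s : 'S_4) (e1 e2 e3 : R),
        ~~ odd_perm s /\ [/\ is_sign e1, is_sign e2 & is_sign e3] /\
        forall i, v i = mk4 0 (e1 / 2) (e2 * t' / 2) (e3 * t / 2) (s i)).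

Definition Delta (v : vec) : Prop := DeltaP tau tau' v.
Definition Delta' (v : vec) : Prop := DeltaP tau' tau v.
Definition Kset (v : vec) : Prop := Delta v /\ Delta' v.
Definition dDelta (v : vec) : Prop := Delta v /\ ~ Kset v.
Definition dDelta' (v : vec) : Prop := Delta' v /\ ~ Kset v.

Definition Ztau := (Z * Z)%type.
Definition emb (y : Ztau) : R := IZR y.1 + IZR y.2 * tau.

(* F_4 = Z[tau]/2Z[tau] = {0, 1, tau, tau'}; note tau' = 1 - tau = 1 + tau mod 2 *)
Inductive F4 := F0 | F1 | Ftau | Ftau'.

Definition red (y : Ztau) : F4 :=
  match Z.odd y.1, Z.odd y.2 with
  | false, false => F0
  | true, false => F1
  | false, true => Ftau
  | true, true => Ftau'
  end.

Definition A0 (i : 'I_4) : F4 :=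
  match nat_of_ord i with 0 => F0 | 1 => F1 | 2 => Ftau' | _ => Ftau end.

Definition dotA (u : 'I_4 -> F4) : Prop :=
  exists s : 'S_4, ~~ odd_perm s /\ forall i, u i = A0 (s i).
Definition dotA' (u : 'I_4 -> F4) : Prop :=
  exists s : 'S_4, odd_perm s /\ forall i, u i = A0 (s i).

Definition dotS (n : nat) (x : vec) : Prop :=
  exists y : 'I_4 -> Ztau,
    (forall i, x i = emb (y i) / 2 ^ n) /\ dot x x = 1 /\ dotA (fun i => red (y i)).
Definition dotS' (n : nat) (x : vec) : Prop :=
  exists y : 'I_4 -> Ztau,
    (forall i, x i = emb (y i) / 2 ^ n) /\ dot x x = 1 /\ dotA' (fun i => red (y i)).

(* Write x = y / 2^n and a = b / 2 with y, b integral over Z[tau].  Then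
   r_a(x) = (2y - (y.b) b) / 2^(n+1), and modulo 2 the new numerator is
   (y.b) b.  Reduced mod 2, y and b are rows A0 o p and A0 o q of opposite
   parities.  The F4-dot product of A0 with A0 o s vanishes exactly when s is
   even (its non-vanishing flips under every transposition, so it is the sign
   character), hence y.b is a unit of F4; and multiplying A0 by a unit of F4
   permutes its entries evenly.  So the new numerator reduces to a row of the
   parity of q.  The roots in dDelta and dDelta' are exactly the irrational
   ones, which are of this form b / 2 with q even, resp. odd. *)

From HB Require Import structures.
From Stdlib Require Import Reals ZArith Lra.
From mathcomp Require Import all_boot all_fingroup.

Set Implicit Arguments.
Unset Strict Implicit.
Unset Printing Implicit Defensive.

Definition F4_eq_dec (u v : F4) : {u = v} + {u <> v}.
Proof. decide equality. Defined.
HB.instance Definition _ := comparableMixin F4_eq_dec.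

Definition F4add (u v : F4) : F4 :=
  match u, v with
  | F0, w | w, F0 => w
  | F1, F1 | Ftau, Ftau | Ftau', Ftau' => F0
  | F1, Ftau | Ftau, F1 => Ftau'
  | F1, Ftau' | Ftau', F1 => Ftau
  | Ftau, Ftau' | Ftau', Ftau => F1
  end.

Definition F4mul (u v : F4) : F4 :=
  match u, v with
  | F0, _ | _, F0 => F0
  | F1, w | w, F1 => w
  | Ftau, Ftau => Ftau'
  | Ftau', Ftau' => Ftau
  | Ftau, Ftau' | Ftau', Ftau => F1
  end.

Lemma F4addA : associative F4add. Proof. by do 3 case. Qed.
Lemma F4addC : commutative F4add. Proof. by do 2 case. Qed.
Lemma F4add0 : left_id F0 F4add. Proof. by case. Qed.
HB.instance Definition _ := Monoid.isComLaw.Build F4 F0 F4add F4addA F4addC F4add0.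

Definition o0 : 'I_4 := @Ordinal 4 0 isT.
Definition o1 : 'I_4 := @Ordinal 4 1 isT.
Definition o2 : 'I_4 := @Ordinal 4 2 isT.
Definition o3 : 'I_4 := @Ordinal 4 3 isT.

Lemma ord4P (i : 'I_4) : [\/ i = o0, i = o1, i = o2 | i = o3].
Proof.
case: i => [[|[|[|[|k]]]] lti] //; [constructor 1|constructor 2|constructor 3|constructor 4];
  exact: val_inj.
Qed.

Lemma big_ord4 (T : Type) (idx : T) (op : T -> T -> T) (F : 'I_4 -> T) :
  \big[op/idx]_(i < 4) F i = op (F o0) (op (F o1) (op (F o2) (op (F o3) idx))).
Proof.
rewrite !big_ord_recl big_ord0.
by congr (op (F _) (op (F _) (op (F _) (op (F _) idx)))); apply: val_inj.
Qed.

Lemma tpermE (T : finType) (x y z : T) :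
  tperm x y z = if z == x then y else if z == y then x else z.
Proof. by case: tpermP => [->|->|/eqP/negPf-> /eqP/negPf->]; rewrite ?eqxx //; case: eqP => // ->. Qed.

Definition dotF (u v : 'I_4 -> F4) : F4 := \big[F4add/F0]_(i < 4) F4mul (u i) (v i).

Lemma dotF_perm (s : 'S_4) (u v : 'I_4 -> F4) :
  dotF (u \o s) (v \o s) = dotF u v.
Proof. by rewrite /dotF [RHS](reindex_inj (@perm_inj _ s)). Qed.

Lemma odd_perm_from_tperm (T : finType) (f : {perm T} -> bool) :
  f 1%g = false -> (forall s x y, x != y -> f (s * tperm x y)%g = ~~ f s) ->
  forall s, f s = odd_perm s.
Proof.
move=> f1 fM s; have [ts -> dts] := prod_tpermP s; rewrite odd_perm_prod //.
suff /(_ 1%g) : forall r, f (r * \prod_(t <- ts) tperm t.1 t.2)%g = odd (size ts) (+) f r.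
  by rewrite mul1g f1 addbF.
elim: ts dts => [_ r|[x y] ts IHts /= /andP[xy dts] r]; first by rewrite big_nil mulg1.
by rewrite big_cons mulgA IHts // fM // addbN addNb.
Qed.

(* [tperm] and [card] do not evaluate, hence the explicit transposition
   [swap4] and the enumeration of ['I_4] by a list. *)
Definition swap4 (x y z : 'I_4) : 'I_4 := if z == x then y else if z == y then x else z.

Definition dotF_A0_neq0_at (a b c d : 'I_4) : bool :=
  F4add (F4mul (A0 o0) (A0 a)) (F4add (F4mul (A0 o1) (A0 b))
    (F4add (F4mul (A0 o2) (A0 c)) (F4add (F4mul (A0 o3) (A0 d)) F0))) != F0.

Definition swap_flips_dotF_A0 : bool :=
  let ords := [:: o0; o1; o2; o3] in
  all (fun a => all (fun b => all (fun c => all (fun d => all (fun x => all (fun y =>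
    uniq [:: a; b; c; d] && (x != y) ==>
    (dotF_A0_neq0_at (swap4 x y a) (swap4 x y b) (swap4 x y c) (swap4 x y d)
       == ~~ dotF_A0_neq0_at a b c d))
    ords) ords) ords) ords) ords) ords.

Lemma swap_flips_dotF_A0_holds : swap_flips_dotF_A0.
Proof. by vm_compute. Qed.

Lemma all_ord4 (P : pred 'I_4) : all P [:: o0; o1; o2; o3] -> forall i, P i.
Proof. by move=> /allP HP i; apply: HP; case: (ord4P i) => ->. Qed.

Lemma dotF_A0_tperm_neq0 (v : 'I_4 -> 'I_4) (x y : 'I_4) : injective v -> x != y ->
  (dotF A0 (A0 \o tperm x y \o v) != F0) = ~~ (dotF A0 (A0 \o v) != F0).
Proof.
move=> v_inj xy; rewrite /dotF !big_ord4 /= !tpermE.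
have uniq_v : uniq [:: v o0; v o1; v o2; v o3].
  by rewrite (map_inj_uniq v_inj [:: o0; o1; o2; o3]).
move: swap_flips_dotF_A0_holds => /all_ord4/(_ (v o0))/all_ord4/(_ (v o1))/all_ord4/(_ (v o2)).
move=> /all_ord4/(_ (v o3))/all_ord4/(_ x)/all_ord4/(_ y).
by rewrite uniq_v xy => /eqP.
Qed.

Lemma dotF_A0_neq0 (s : 'S_4) : (dotF A0 (A0 \o s) != F0) = odd_perm s.
Proof.
move: s; apply: odd_perm_from_tperm => [|r x y xy].
  by rewrite /dotF big_ord4 /= !perm1.
rewrite -(dotF_A0_tperm_neq0 (@perm_inj _ r) xy) /dotF.
by under eq_bigr do rewrite /= permM.
Qed.

Lemma dotF_A0_perms_neq0 (p q : 'S_4) :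
  (dotF (A0 \o p) (A0 \o q) != F0) = odd_perm p (+) odd_perm q.
Proof.
rewrite -(dotF_perm p^-1) -[odd_perm p]odd_permV -odd_permM -dotF_A0_neq0 /dotF.
by congr (_ != F0); apply: eq_bigr => i _ /=; rewrite permKV permM.
Qed.

Definition F4mul_perm (c : F4) : 'S_4 :=
  match c with
  | Ftau => tperm o1 o3 * tperm o1 o2
  | Ftau' => tperm o1 o2 * tperm o1 o3
  | _ => 1
  end%g.

Lemma F4mul_A0 (c : F4) (i : 'I_4) : c != F0 -> F4mul c (A0 i) = A0 (F4mul_perm c i).
Proof. by case: c => // _; case: (ord4P i) => ->; rewrite /= ?perm1 ?permM ?tpermE. Qed.

Lemma odd_F4mul_perm (c : F4) : odd_perm (F4mul_perm c) = false.
Proof. by case: c; rewrite /= ?odd_perm1 ?odd_permM ?odd_tperm. Qed.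

Local Open Scope R_scope.

Lemma tau_sq : tau * tau = tau + 1.
Proof.
rewrite /tau; have s5 := sqrt_sqrt 5 ltac:(lra).
transitivity ((1 + 2 * sqrt 5 + sqrt 5 * sqrt 5) / 4); first field.
rewrite s5; field.
Qed.

Lemma tau'E : tau' = 1 - tau.
Proof. rewrite /tau /tau'; field. Qed.

Definition z0 : Ztau := (0%Z, 0%Z).
Definition zadd (u v : Ztau) : Ztau := (u.1 + v.1, u.2 + v.2)%Z.
Definition zsub (u v : Ztau) : Ztau := (u.1 - v.1, u.2 - v.2)%Z.
Definition zdouble (u : Ztau) : Ztau := (2 * u.1, 2 * u.2)%Z.
Definition zmul (u v : Ztau) : Ztau :=
  (u.1 * v.1 + u.2 * v.2, u.1 * v.2 + u.2 * v.1 + u.2 * v.2)%Z.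

Lemma zaddA : associative zadd.
Proof. by move=> [a b] [c d] [e f]; rewrite /zadd /= !Z.add_assoc. Qed.
Lemma zaddC : commutative zadd.
Proof. by move=> [a b] [c d]; rewrite /zadd /= Z.add_comm [(b + _)%Z]Z.add_comm. Qed.
Lemma zadd0 : left_id z0 zadd.
Proof. by case. Qed.
HB.instance Definition _ := Monoid.isComLaw.Build Ztau z0 zadd zaddA zaddC zadd0.

HB.instance Definition _ := Monoid.isComLaw.Build R 0 Rplus
  (fun a b c => esym (Rplus_assoc a b c)) Rplus_comm Rplus_0_l.

Lemma emb0 : emb z0 = 0.
Proof. rewrite /emb /=; ring. Qed.
Lemma emb_add u v : emb (zadd u v) = emb u + emb v.
Proof. rewrite /emb /zadd; cbn [fst snd]; rewrite !plus_IZR; ring. Qed.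
Lemma emb_sub u v : emb (zsub u v) = emb u - emb v.
Proof. rewrite /emb /zsub; cbn [fst snd]; rewrite !minus_IZR; ring. Qed.
Lemma emb_double u : emb (zdouble u) = 2 * emb u.
Proof. rewrite /emb /zdouble; cbn [fst snd]; rewrite !mult_IZR; ring. Qed.
Lemma emb_mul u v : emb (zmul u v) = emb u * emb v.
Proof.
rewrite /emb /zmul; cbn [fst snd]; rewrite !plus_IZR !mult_IZR.
transitivity (IZR u.1 * IZR v.1 + IZR u.2 * IZR v.2 * (tau * tau)
  + (IZR u.1 * IZR v.2 + IZR u.2 * IZR v.1) * tau); last by ring.
rewrite tau_sq; ring.
Qed.

Lemma red0 : red z0 = F0.
Proof. by []. Qed.
Lemma red_add u v : red (zadd u v) = F4add (red u) (red v).
Proof.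
rewrite /red /zadd; cbn [fst snd]; rewrite !Z.odd_add.
by case: (Z.odd u.1); case: (Z.odd u.2); case: (Z.odd v.1); case: (Z.odd v.2).
Qed.
Lemma red_mul u v : red (zmul u v) = F4mul (red u) (red v).
Proof.
rewrite /red /zmul; cbn [fst snd]; rewrite !Z.odd_add !Z.odd_mul.
by case: (Z.odd u.1); case: (Z.odd u.2); case: (Z.odd v.1); case: (Z.odd v.2).
Qed.
Lemma red_zsub_double u v : red (zsub (zdouble u) v) = red v.
Proof.
rewrite /red /zsub /zdouble; cbn [fst snd]; rewrite !Z.odd_sub !Z.odd_mul /=.
by case: (Z.odd v.1); case: (Z.odd v.2).
Qed.

Definition dotZ (y b : 'I_4 -> Ztau) : Ztau := \big[zadd/z0]_(i < 4) zmul (y i) (b i).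

Lemma red_dotZ y b : red (dotZ y b) = dotF (red \o y) (red \o b).
Proof. by rewrite /dotZ (big_morph red red_add red0); apply: eq_bigr => i _; rewrite red_mul. Qed.

Lemma emb_dotZ y b : emb (dotZ y b) = \big[Rplus/0]_(i < 4) (emb (y i) * emb (b i)).
Proof. by rewrite /dotZ (big_morph emb emb_add emb0); apply: eq_bigr => i _; rewrite emb_mul. Qed.

Lemma dot_emb (n m : nat) (x a : vec) (y b : 'I_4 -> Ztau) :
  (forall i, x i = emb (y i) / 2 ^ n) -> (forall i, a i = emb (b i) / 2 ^ m) ->
  dot x a = emb (dotZ y b) / 2 ^ (n + m).
Proof.
move=> Hx Ha; have n2 : 2 ^ n <> 0 by apply: pow_nonzero; lra.
have m2 : 2 ^ m <> 0 by apply: pow_nonzero; lra.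
rewrite emb_dotZ (big_endo (fun t => t / 2 ^ (n + m))) => [|t u|]; last 2 first.
- by rewrite /Rdiv Rmult_plus_distr_r.
- by rewrite /Rdiv Rmult_0_l.
by apply: eq_bigr => i _; rewrite Hx Ha pow_add; field; split.
Qed.

Lemma refl_emb (n : nat) (x a : vec) (y b : 'I_4 -> Ztau) :
  (forall i, x i = emb (y i) / 2 ^ n) -> (forall i, a i = emb (b i) / 2) ->
  forall i, refl a x i = emb (zsub (zdouble (y i)) (zmul (dotZ y b) (b i))) / 2 ^ n.+1.
Proof.
move=> Hx Ha i; have n2 : 2 ^ n <> 0 by apply: pow_nonzero; lra.
have Ha1 : forall i, a i = emb (b i) / 2 ^ 1 by move=> j; rewrite Ha pow_1.
rewrite /refl (dot_emb Hx Ha1) Hx Ha emb_sub emb_double emb_mul addn1 /=.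
by field.
Qed.

Lemma refl_norm (a x : vec) : dot a a = 1 -> dot x x = 1 -> dot (refl a x) (refl a x) = 1.
Proof.
move=> aa1 xx1; rewrite /refl.
move xa : (dot x a) => k.
rewrite /dot !big_ord4 in aa1 xx1 xa *.
have := f_equal (Rmult (k * k)) aa1; have := f_equal (Rmult k) xa.
lra.
Qed.

Lemma is_sign_IZR (e : R) : is_sign e -> exists E : Z, e = IZR E /\ Z.odd E.
Proof. by case=> ->; [exists 1%Z | exists (-1)%Z]. Qed.

Lemma mk4_tperm23 (c0 c1 c2 c3 : R) (j : 'I_4) :
  mk4 c0 c1 c2 c3 (tperm o2 o3 j) = mk4 c0 c1 c3 c2 j.
Proof. by rewrite tpermE; case: (ord4P j) => ->. Qed.

Definition root_lift (odd : bool) (a : vec) : Prop :=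
  dot a a = 1 /\ exists (q : 'S_4) (b : 'I_4 -> Ztau), odd_perm q = odd /\
    (forall i, a i = emb (b i) / 2) /\ forall i, red (b i) = A0 (q i).

Lemma mk4_root_lift (s : 'S_4) (e1 e2 e3 : R) (a : vec) :
  is_sign e1 -> is_sign e2 -> is_sign e3 ->
  (forall i, a i = mk4 0 (e1 / 2) (e2 * tau' / 2) (e3 * tau / 2) (s i)) ->
  root_lift (odd_perm s) a.
Proof.
move=> h1 h2 h3 Ha; split.
  set g := mk4 _ _ _ _ in Ha.
  have sign_sq e : is_sign e -> e * e = 1 by case=> ->; ring.
  rewrite /dot (eq_bigr (fun i => g (s i) * g (s i))) => [|i _]; last by rewrite Ha.
  rewrite (reindex_inj (@perm_inj _ s^-1)) /=; under eq_bigr do rewrite permKV.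
  rewrite big_ord4 /g /mk4 /= tau'E.
  have := tau_sq; have := sign_sq _ h1; have := sign_sq _ h2; have := sign_sq _ h3.
  nra.
have [E1 [e1E odd1]] := is_sign_IZR h1.
have [E2 [e2E odd2]] := is_sign_IZR h2.
have [E3 [e3E odd3]] := is_sign_IZR h3.
exists s, (fun i => match nat_of_ord (s i) with
  | 0 => z0 | 1 => (E1, 0%Z) | 2 => (E2, (- E2)%Z) | _ => (0%Z, E3) end).
split=> //; split=> i; case: (ord4P (s i)) => si.
all: rewrite ?Ha si /mk4 /emb /red /=.
all: rewrite ?e1E ?e2E ?e3E ?Z.odd_opp ?odd1 ?odd2 ?odd3 ?opp_IZR ?tau'E //.
all: field.
Qed.

Lemma DeltaP_irrational (t t' : R) (v : vec) : DeltaP t t' v -> ~ DeltaP t' t v ->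
  exists (s : 'S_4) (e1 e2 e3 : R), ~~ odd_perm s /\
    [/\ is_sign e1, is_sign e2 & is_sign e3] /\
    forall i, v i = mk4 0 (e1 / 2) (e2 * t' / 2) (e3 * t / 2) (s i).
Proof. by case=> [D|[D|D]] nD //; case: nD; [left | right; left]. Qed.

Lemma dDelta_root_lift (a : vec) : dDelta a -> root_lift false a.
Proof.
case=> Da nK; have [s [e1 [e2 [e3 [s_even [[h1 h2 h3] Ha]]]]]] :=
  DeltaP_irrational Da (fun Da' => nK (conj Da Da')).
by rewrite -(negPf s_even); apply: mk4_root_lift h1 h2 h3 Ha.
Qed.

Lemma dDelta'_root_lift (a : vec) : dDelta' a -> root_lift true a.
Proof.
case=> Da' nK; have [s [e1 [e2 [e3 [s_even [[h1 h2 h3] Ha]]]]]] :=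
  DeltaP_irrational Da' (fun Da => nK (conj Da Da')).
have -> : true = odd_perm (s * tperm o2 o3)%g by rewrite odd_permM odd_tperm (negPf s_even).
by apply: mk4_root_lift h1 h3 h2 _ => i; rewrite Ha permM mk4_tperm23.
Qed.

Definition dotSb (odd : bool) (n : nat) (x : vec) : Prop :=
  exists y : 'I_4 -> Ztau, (forall i, x i = emb (y i) / 2 ^ n) /\ dot x x = 1 /\
    exists p : 'S_4, odd_perm p = odd /\ forall i, red (y i) = A0 (p i).

Lemma dotSE (n : nat) (x : vec) : dotS n x <-> dotSb false n x.
Proof.
by split=> -[y [Hx [xx1 [p [op Hp]]]]]; exists y; split=> //; split=> //; exists p;
  rewrite ?(negPf op) ?op.
Qed.

Lemma dotS'E (n : nat) (x : vec) : dotS' n x <-> dotSb true n x.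
Proof. by split=> -[y [Hx [xx1 [p [op Hp]]]]]; exists y; split=> //; split=> //; exists p. Qed.

Lemma refl_dotSb (odd : bool) (n : nat) (a x : vec) :
  root_lift odd a -> dotSb (~~ odd) n x -> dotSb odd n.+1 (refl a x).
Proof.
move=> [aa1 [q [b [oq [Ha red_b]]]]] [y [Hx [xx1 [p [op red_y]]]]].
set c := dotZ y b.
have c_nz : red c != F0.
  rewrite red_dotZ; have -> : dotF (red \o y) (red \o b) = dotF (A0 \o p) (A0 \o q).
    by apply: eq_bigr => i _ /=; rewrite red_y red_b.
  by rewrite dotF_A0_perms_neq0 op oq addNb addbb.
exists (fun i => zsub (zdouble (y i)) (zmul c (b i))); split; first exact: refl_emb.
split; first exact: refl_norm.
exists (q * F4mul_perm (red c))%g; split; first by rewrite odd_permM odd_F4mul_perm addbF.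
by move=> i; rewrite red_zsub_double red_mul red_b F4mul_A0 // permM.
Qed.

Theorem mainTheorem2 (n : nat) (hn : (1 <= n)%N) :
  (forall a' : vec, dDelta' a' -> forall x : vec, dotS n x -> dotS' n.+1 (refl a' x))
  /\ (forall a : vec, dDelta a -> forall x : vec, dotS' n x -> dotS n.+1 (refl a x)).
Proof.
split=> a.
- by move=> /dDelta'_root_lift Ha x /dotSE Hx; apply/dotS'E; apply: refl_dotSb.
- by move=> /dDelta_root_lift Ha x /dotS'E Hx; apply/dotSE; apply: refl_dotSb.
Qed.
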